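(* Let $G$ and $G'$ be finite groups. Then $G$ and $G'$ are both almost monomial if and only if the direct product $G\times G'$ is almost monomial.
   Context: A finite group $G$ is called almost monomial if for every two distinct complex irreducible characters $\chi$ and $\psi$ of $G$ there exist a subgroup $H\le G$ and a linear (degree one) character $\varphi$ of $H$ such that the induced character $\operatorname{Ind}_H^G\varphi$ contains $\chi$ (i.e. $\langle \operatorname{Ind}_H^G\varphi,\chi\rangle\neq 0$) and does not contain $\psi$ (i.e. $\langle \operatorname{Ind}_H^G\varphi,\psi\rangle=0$), where $\langle\,,\rangle$ is the usual inner product of class functions. *)

From HB Require Import structures.
From mathcomp Require Import all_boot all_order all_algebra all_fingroup all_solvable all_field all_character.
Set Implicit Arguments. Unset Strict Implicit. Unset Printing Implicit Defensive.
Import GRing.Theory Num.Theory.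
Local Open Scope ring_scope.

Definition almost_monomial (gT : finGroupType) (G : {group gT}) : Prop :=
  forall i j : Iirr G, 'chi[G]_i != 'chi[G]_j ->
    exists (H : {group gT}) (phi : 'CF(H)),
      [/\ H \subset G, phi \is a linear_char,
          '['Ind[G, H] phi, 'chi[G]_i] != 0 &
          '['Ind[G, H] phi, 'chi[G]_j] = 0].

From HB Require Import structures.
From mathcomp Require Import all_boot all_order all_algebra all_fingroup all_solvable all_field all_character.
Set Implicit Arguments. Unset Strict Implicit. Unset Printing Implicit Defensive.
Import GRing.Theory Num.Theory.
Local Open Scope ring_scope.

(* The irreducible characters of G x G' are the products chi x psi. If
   chi1 <> chi2 and the linear character phi of H <= G separates them, then
   phi x 1 on H x 1 separates chi1 x psi1 from chi2 x psi2, because by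
   Frobenius reciprocity <Ind (phi x 1), chi x psi> = psi(1) <Ind phi, chi>;
   symmetrically if psi1 <> psi2. Conversely, almost monomiality passes to
   homomorphic images: inflate two irreducibles of f(P) to P and separate them
   there by a linear lam of K <= P. As lam is a constituent of the restriction
   of an inflated character, its kernel contains ker_K f, so lam descends to a
   linear character of f(K) separating the two characters of f(P). *)

Definition Ind_separates (gT : finGroupType) (G H : {group gT}) (phi : 'CF(H))
    (chi psi : 'CF(G)) : Prop :=
  [/\ H \subset G, phi \is a linear_char,
      '['Ind[G, H] phi, chi] != 0 & '['Ind[G, H] phi, psi] = 0].

Lemma cfMorph_lift (aT rT : finGroupType) (D K : {group aT})
    (f : {morphism D >-> rT}) (lam : 'CF(K)) :
  K \subset D -> ('ker_K f \subset cfker lam)%g ->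
  exists phi : 'CF(f @* K), cfMorph phi = lam.
Proof.
move=> sKD kerL.
have nsNK : ('ker_K f <| K)%g.
  by rewrite /normal subsetIl normsI ?normG ?(subset_trans sKD) ?ker_norm.
have [g g_inj im_g] := first_isom_loc f sKD.
have isoKf : isom (K / 'ker_K f)%g (f @* K) g by apply/isomP; split; rewrite ?im_g.
exists (cfIsom isoKf (lam / 'ker_K f)%CF).
apply/cfun_inP => x Kx; rewrite cfMorphE //.
have -> : f x = g (coset ('ker_K f)%g x).
  apply/set1_inj.
  rewrite -?morphim_set1 ?im_g ?(subsetP (normal_norm nsNK)) ?sub1set ?mem_quotient //.
  by rewrite (subsetP sKD).
by rewrite cfIsomE ?mem_quotient // cfQuoE.
Qed.

Lemma ker_sub_cfker_constt (aT rT : finGroupType) (D P K : {group aT})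
    (f : {morphism D >-> rT}) (lam : 'CF(K)) (chi : 'CF(f @* P)) :
  K \subset P -> P \subset D -> lam \in irr K -> chi \is a character ->
  '['Ind[P] lam, cfMorph chi] != 0 -> ('ker_K f \subset cfker lam)%g.
Proof.
move=> sKP sPD /irrP[l ->] Nchi nz_lam_chi.
have sKD := subset_trans sKP sPD.
have NchiK : cfMorph ('Res[f @* K] chi) \is a character.
  by rewrite cfMorph_char ?cfRes_char.
have l_constt : l \in irr_constt (cfMorph ('Res[f @* K] chi)).
  by rewrite irr_consttE cfdotC conjC_eq0 -cfResMorph // Frobenius_reciprocity.
apply: subset_trans (cfker_constt NchiK l_constt).
by rewrite cfker_morph // setIS ?ker_sub_pre.
Qed.

Lemma Ind_separates_morphim (aT rT : finGroupType) (D P K : {group aT})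
    (f : {morphism D >-> rT}) (lam : 'CF(K)) (chi psi : 'CF(f @* P)) :
  P \subset D -> chi \is a character ->
  Ind_separates lam (cfMorph chi) (cfMorph psi) ->
  exists phi : 'CF(f @* K), Ind_separates phi chi psi.
Proof.
move=> sPD Nchi [sKP linL nz_chi z_psi].
have sKD := subset_trans sKP sPD.
have kerL := ker_sub_cfker_constt sKP sPD (lin_char_irr linL) Nchi nz_chi.
have [phi Ephi] := cfMorph_lift sKD kerL.
have IndE (xi : 'CF(f @* P)) : '['Ind[f @* P] phi, xi] = '['Ind[P] lam, cfMorph xi].
  by rewrite -!Frobenius_reciprocity cfResMorph // -Ephi cfMorph_iso.
exists phi; split; rewrite ?IndE ?morphimS //.
by rewrite -(cfMorph_lin_charE _ sKD) Ephi.
Qed.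

Lemma almost_monomial_morphim (aT rT : finGroupType) (D P : {group aT})
    (f : {morphism D >-> rT}) :
  P \subset D -> almost_monomial P -> almost_monomial (f @* P)%G.
Proof.
move=> sPD amP i j chi_neq.
have /irrP[i' Ei'] : cfMorph 'chi[f @* P]_i \in irr P by rewrite cfMorph_irr ?mem_irr.
have /irrP[j' Ej'] : cfMorph 'chi[f @* P]_j \in irr P by rewrite cfMorph_irr ?mem_irr.
have chi'_neq : 'chi_i' != 'chi_j' by rewrite -Ei' -Ej' (inj_eq (cfMorph_inj sPD)).
have [K [lam sep]] := amP i' j' chi'_neq.
rewrite -Ei' -Ej' in sep.
have [phi phi_sep] := Ind_separates_morphim sPD (irr_char i) sep.
by exists (f @* K)%G, phi.
Qed.

Lemma cfdot_Ind_cfMorph_mul (aT r1 r2 : finGroupType) (D1 D2 P K : {group aT})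
    (f1 : {morphism D1 >-> r1}) (f2 : {morphism D2 >-> r2})
    (phi : 'CF(f1 @* K)) (chi : 'CF(f1 @* P)) (psi : 'CF(f2 @* P)) :
  P \subset D1 -> P \subset D2 -> K \subset P -> (f2 @* K)%g = 1%g ->
  '['Ind[P] (cfMorph phi), cfMorph chi * cfMorph psi] =
    (psi 1%g)^* * '['Ind[f1 @* P] phi, chi].
Proof.
move=> sPD1 sPD2 sKP f2K1.
have sKD1 := subset_trans sKP sPD1; have sKD2 := subset_trans sKP sPD2.
have ResK : 'Res[K] (cfMorph chi * cfMorph psi) = psi 1%g *: cfMorph ('Res[f1 @* K] chi).
  apply/cfun_inP => x Kx.
  have f2x1 : f2 x = 1%g.
    by apply/set1P; rewrite -[[set _]]f2K1 mem_morphim // (subsetP sKD2).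
  have f1x : f1 x \in (f1 @* K)%g by rewrite mem_morphim // (subsetP sKD1).
  rewrite cfResE // !cfunE !cfMorphE ?(subsetP sKP) // f2x1 cfResE ?morphimS //.
  by rewrite mulrC.
by rewrite -!Frobenius_reciprocity ResK cfdotZr cfMorph_iso.
Qed.

Lemma Ind_separates_cfMorph_mul (aT r1 r2 : finGroupType) (D1 D2 P K : {group aT})
    (f1 : {morphism D1 >-> r1}) (f2 : {morphism D2 >-> r2}) (H : {group r1})
    (phi : 'CF(H)) (chi1 chi2 : 'CF(f1 @* P)) (psi1 psi2 : 'CF(f2 @* P)) :
  P \subset D1 -> P \subset D2 -> K \subset P ->
  (f1 @* K)%g = H :> {set r1} -> (f2 @* K)%g = 1%g ->
  psi1 \in irr (f2 @* P) -> Ind_separates phi chi1 chi2 ->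
  exists lam : 'CF(K),
    Ind_separates lam (cfMorph chi1 * cfMorph psi1) (cfMorph chi2 * cfMorph psi2).
Proof.
move=> sPD1 sPD2 sKP f1K f2K1 /irrP[k ->] [_ linphi nz_chi1 z_chi2].
have f1KH : (f1 @* K)%G = H by apply: val_inj.
subst H.
exists (cfMorph phi); split => //.
- by rewrite cfMorph_lin_char.
- rewrite cfdot_Ind_cfMorph_mul //.
  by rewrite mulf_neq0 // conjC_eq0 irr1_neq0.
- by rewrite cfdot_Ind_cfMorph_mul // z_chi2 mulr0.
Qed.

Section DirectProduct.

Variables (gT gT' : finGroupType) (G : {group gT}) (G' : {group gT'}).
Local Notation P := (setX_group G G').
Local Notation fst_m := (@fst_morphism gT gT').
Local Notation snd_m := (@snd_morphism gT gT').

Lemma irr_setX (k : Iirr P) :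
  exists (i : Iirr (fst_m @* P)%G) (j : Iirr (snd_m @* P)%G),
    'chi_k = cfMorph 'chi_i * cfMorph 'chi_j.
Proof.
have GxG' := setX_dprod G G'.
rewrite -(inv_dprod_IirrK GxG' k); case: (inv_dprod_Iirr GxG' k) => a b.
rewrite dprod_IirrE /cfDprod.
have ker_fst : ('ker_P fst_m \subset cfker (cfDprodl GxG' 'chi_a))%g.
  apply: subset_trans (mulG_sub (dprodW (cfker_dprodl GxG' 'chi_a))).2.
  by apply/subsetP => -[x y]; rewrite !inE /= => /andP[/andP[_ ->] ->].
have ker_snd : ('ker_P snd_m \subset cfker (cfDprodr GxG' 'chi_b))%g.
  apply: subset_trans (mulG_sub (dprodW (cfker_dprodr GxG' 'chi_b))).1.
  by apply/subsetP => -[x y]; rewrite !inE /= => /andP[/andP[-> _] ->].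
have [phi1 E1] := cfMorph_lift (subsetT P) ker_fst.
have [phi2 E2] := cfMorph_lift (subsetT P) ker_snd.
have /irrP[i Ei] : phi1 \in irr (fst_m @* P)%G.
  by rewrite -(cfMorph_irr _ (subsetT P)) E1 cfDprodl_irr mem_irr.
have /irrP[j Ej] : phi2 \in irr (snd_m @* P)%G.
  by rewrite -(cfMorph_irr _ (subsetT P)) E2 cfDprodr_irr mem_irr.
by exists i, j; rewrite -Ei -Ej E1 E2.
Qed.

Lemma almost_monomial_setX :
  almost_monomial (fst_m @* P)%G -> almost_monomial (snd_m @* P)%G ->
  almost_monomial P.
Proof.
move=> am1 am2 k1 k2.
have [i1 [j1 ->]] := irr_setX k1; have [i2 [j2 ->]] := irr_setX k2.
have [Ei | chi_neq] := eqVneq 'chi_i1 'chi_i2 => prod_neq.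
- have psi_neq : 'chi_j1 != 'chi_j2.
    by apply: contraNneq prod_neq => ->; rewrite Ei.
  have [H [phi sep]] := am2 j1 j2 psi_neq.
  have sHG' : H \subset G' by case: sep => + _ _ _; rewrite /= morphim_sndX.
  have sKP : setX_group 1 H \subset P by rewrite setXS ?sub1G.
  have imK : (snd_m @* setX_group 1 H)%g = H by rewrite /= morphim_sndX.
  have imK1 : (fst_m @* setX_group 1 H)%g = 1%g by rewrite /= morphim_fstX.
  have [lam lam_sep] := Ind_separates_cfMorph_mul
    'chi_i2 (subsetT P) (subsetT P) sKP imK imK1 (mem_irr i1) sep.
  exists (setX_group 1 H), lam.
  by rewrite (mulrC (cfMorph 'chi_i1)) (mulrC (cfMorph 'chi_i2)).
- have [H [phi sep]] := am1 i1 i2 chi_neq.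
  have sHG : H \subset G by case: sep => + _ _ _; rewrite /= morphim_fstX.
  have sKP : setX_group H 1 \subset P by rewrite setXS ?sub1G.
  have imK : (fst_m @* setX_group H 1)%g = H by rewrite /= morphim_fstX.
  have imK1 : (snd_m @* setX_group H 1)%g = 1%g by rewrite /= morphim_sndX.
  have [lam lam_sep] := Ind_separates_cfMorph_mul
    'chi_j2 (subsetT P) (subsetT P) sKP imK imK1 (mem_irr j1) sep.
  by exists (setX_group H 1), lam.
Qed.
End DirectProduct.

Theorem theorem2p3 (gT gT' : finGroupType) (G : {group gT}) (G' : {group gT'}) :
  (almost_monomial G /\ almost_monomial G') <->
  almost_monomial (setX_group G G').
Proof.
have imG : ((@fst_morphism gT gT') @* setX_group G G')%G = G.
  by apply: val_inj; rewrite /= morphim_fstX.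
have imG' : ((@snd_morphism gT gT') @* setX_group G G')%G = G'.
  by apply: val_inj; rewrite /= morphim_sndX.
split=> [[amG amG'] | amP].
  by apply: almost_monomial_setX; rewrite ?imG ?imG'.
by split; [rewrite -imG | rewrite -imG']; apply: almost_monomial_morphim (subsetT _) amP.
Qed.
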